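(* For each $\nu\in\{1,\dots,5\}$ and each $Y$ in the domain of $Z^\nu_1$ (i.e. where $1-y_2z_1$, $z_1+z_3$, $y_2z_3+1$ are all nonzero), the $8\times 20$ Jacobian matrix $\dfrac{\partial Z^\nu_1}{\partial Y}(Y)$ has rank at most $5$.
   Context: Let $Y=(z_1,y_2,z_3,z_4,y_5,p_3,p_4,p_5,q_4,q_5,\kappa_1,\dots,\kappa_5)\in\mathbb R^{20}$, where $z_1,y_2,z_3,z_4,y_5,\kappa_1,\dots,\kappa_5\in\mathbb R$ and $p_3,p_4,p_5,q_4,q_5\in\mathbb R^2$. Set $\delta^0=(1,1)$, $\alpha_1=(-1,z_1)$, $\alpha_2=(y_2,-1)$, $\alpha_3=(1,z_3)$, $\alpha_4=(1,z_4)$, $\alpha_5=(y_5,1)$, and define $p_1=\frac{y_2z_3+1}{1-y_2z_1}p_3+\frac{y_2z_4+1}{1-y_2z_1}p_4+\frac{y_2+y_5}{1-y_2z_1}p_5$, $p_2=\frac{z_1+z_3}{1-y_2z_1}p_3+\frac{z_1+z_4}{1-y_2z_1}p_4+\frac{y_5z_1+1}{1-y_2z_1}p_5$, $q_1=\frac{(y_2z_4+1)(z_3-z_4)}{(z_1+z_3)(y_2z_1-1)}q_4+\frac{(y_2+y_5)(y_5z_3-1)}{(z_1+z_3)(y_2z_1-1)}q_5$, $q_2=-\frac{(z_1+z_4)(z_3-z_4)}{(y_2z_1-1)(y_2z_3+1)}q_4-\frac{(y_5z_1+1)(y_5z_3-1)}{(y_2z_1-1)(y_2z_3+1)}q_5$,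 $q_3=-\frac{(z_1+z_4)(y_2z_4+1)}{(z_1+z_3)(y_2z_3+1)}q_4-\frac{(y_2+y_5)(y_5z_1+1)}{(z_1+z_3)(y_2z_3+1)}q_5$. For $j=1,\dots,5$ let $C_j(Y)=\begin{pmatrix}p_j\\ (\alpha_j\cdot\delta^0)q_j\end{pmatrix}\otimes\alpha_j\in\mathbb M^{4\times 2}$, and $Z^\nu_1(Y)=\kappa_\nu C_\nu(Y)$. The space $\mathbb M^{4\times 2}$ is identified with $\mathbb R^8$ by stacking columns: $(x_{ik})\mapsto(x_{11},x_{21},x_{31},x_{41},x_{12},x_{22},x_{32},x_{42})$. *)

From HB Require Import structures.
From mathcomp Require Import all_boot all_order all_algebra.
From mathcomp Require Import all_classical all_reals all_analysis.
Set Implicit Arguments. Unset Strict Implicit. Unset Printing Implicit Defensive.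
Import Order.TTheory GRing.Theory Num.Theory.
Import numFieldNormedType.Exports.
Local Open Scope ring_scope.

(* Coordinates of Y in R^20, in the order
   (z1, y2, z3, z4, y5, p3, p4, p5, q4, q5, kappa1, ..., kappa5),
   indices 0..19:  z1=0 y2=1 z3=2 z4=3 y5=4 p3=5,6 p4=7,8 p5=9,10
   q4=11,12 q5=13,14 kappa_j = 14 + j (j = 1..5). *)
Section Defs.
Variable R : realType.
Implicit Type Y : 'rV[R]_20.

Definition Yc Y (k : nat) : R := Y 0 (inord k).

Definition z1 Y := Yc Y 0.
Definition y2 Y := Yc Y 1.
Definition z3 Y := Yc Y 2.
Definition z4 Y := Yc Y 3.
Definition y5 Y := Yc Y 4.
(* second argument k in {0,1}: component of the vector in R^2 *)
Definition p3 Y k := Yc Y (5 + k).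
Definition p4 Y k := Yc Y (7 + k).
Definition p5 Y k := Yc Y (9 + k).
Definition q4 Y k := Yc Y (11 + k).
Definition q5 Y k := Yc Y (13 + k).
Definition kappa Y (j : nat) := Yc Y (14 + j).

Definition alpha Y (j k : nat) : R :=
  match j with
  | 1 => if k == 0%N then -1 else z1 Y
  | 2 => if k == 0%N then y2 Y else -1
  | 3 => if k == 0%N then 1 else z3 Y
  | 4 => if k == 0%N then 1 else z4 Y
  | _ => if k == 0%N then y5 Y else 1
  end.

(* alpha_j . delta^0 with delta^0 = (1,1) *)
Definition alpha_dot_delta0 Y j := alpha Y j 0 * 1 + alpha Y j 1 * 1.

Definition pvec Y (j k : nat) : R :=
  let a := z1 Y in let b := y2 Y in let c := z3 Y in
  let d := z4 Y in let e := y5 Y in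
  match j with
  | 1 => (b * c + 1) / (1 - b * a) * p3 Y k
         + (b * d + 1) / (1 - b * a) * p4 Y k
         + (b + e) / (1 - b * a) * p5 Y k
  | 2 => (a + c) / (1 - b * a) * p3 Y k
         + (a + d) / (1 - b * a) * p4 Y k
         + (e * a + 1) / (1 - b * a) * p5 Y k
  | 3 => p3 Y k
  | 4 => p4 Y k
  | _ => p5 Y k
  end.

Definition qvec Y (j k : nat) : R :=
  let a := z1 Y in let b := y2 Y in let c := z3 Y in
  let d := z4 Y in let e := y5 Y in
  match j with
  | 1 => (b * d + 1) * (c - d) / ((a + c) * (b * a - 1)) * q4 Y k
         + (b + e) * (e * c - 1) / ((a + c) * (b * a - 1)) * q5 Y k
  | 2 => - ((a + d) * (c - d) / ((b * a - 1) * (b * c + 1))) * q4 Y k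
         - ((e * a + 1) * (e * c - 1) / ((b * a - 1) * (b * c + 1))) * q5 Y k
  | 3 => - ((a + d) * (b * d + 1) / ((a + c) * (b * c + 1))) * q4 Y k
         - ((b + e) * (e * a + 1) / ((a + c) * (b * c + 1))) * q5 Y k
  | 4 => q4 Y k
  | _ => q5 Y k
  end.

Definition Cvec Y (j i : nat) : R :=
  if (i < 2)%N then pvec Y j i else alpha_dot_delta0 Y j * qvec Y j (i - 2).

Definition Cmat Y (j i k : nat) : R := Cvec Y j i * alpha Y j k.

(* Z^nu_1(Y) = kappa_nu C_nu(Y), flattened by stacking columns:
   entry l (0-based) corresponds to (i, k) = (l mod 4, l div 4). *)
Definition Z1 (nu : nat) (Y : 'rV[R]_20) : 'rV[R]_8 :=
  \row_(l < 8) (kappa Y nu * Cmat Y nu (l %% 4) (l %/ 4)).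

Definition jacobianZ (f : 'rV[R]_20 -> 'rV[R]_8) (Y : 'rV[R]_20) : 'M[R]_(8, 20) :=
  \matrix_(l < 8, m < 20) ('D_(delta_mx 0 m : 'rV[R]_20) f Y) 0 l.

Definition in_domain Y : Prop :=
  1 - y2 Y * z1 Y != 0 /\ z1 Y + z3 Y != 0 /\ y2 Y * z3 Y + 1 != 0.

End Defs.

From HB Require Import structures.
From mathcomp Require Import all_boot all_order all_algebra.
From mathcomp Require Import all_classical all_reals all_analysis.
Set Implicit Arguments. Unset Strict Implicit. Unset Printing Implicit Defensive.
Import Order.TTheory GRing.Theory Num.Theory.
Import numFieldNormedType.Exports.
Local Open Scope ring_scope.

(* Every entry of Z^nu_1 is a product (kappa_nu C_nu)_i * (alpha_nu)_k, and one
   coordinate of alpha_nu is the constant 1 or -1.  By the product rule each row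
   of the Jacobian is therefore a combination of the four gradients of
   kappa_nu C_nu and of the gradient of the single non-constant coordinate of
   alpha_nu, so the row space has dimension at most 4 + 1 = 5. *)

Section RowSpan.
Variable F : fieldType.

Lemma mxrank_rows_combination (N m d : nat) (J : 'M[F]_(N, d)) (G : 'M[F]_(m, d))
    (h : 'rV[F]_d) (a b : 'I_N -> F) (i : 'I_N -> 'I_m) :
  (forall l, row l J = a l *: row (i l) G + b l *: h) -> (\rank J <= m.+1)%N.
Proof.
move=> rowJ; rewrite -addn1; apply: leq_trans (rank_leq_row (col_mx G h)).
apply/mxrankS/row_subP => l; rewrite rowJ -addsmxE.
apply: addmx_sub; apply: scalemx_sub.
- exact: submx_trans (row_sub _ _) (addsmxSl _ _).
- exact: addsmxSr.
Qed.

End RowSpan.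

Section Gradient.
Variables (R : realType) (n : nat).
Implicit Types (f g : 'rV[R]_n -> R) (x : 'rV[R]_n).

Definition gradient f x : 'rV[R]_n := \row_m 'D_(delta_mx 0 m) f x.

Lemma gradientM f g x :
  (forall m, derivable f x (delta_mx 0 m)) -> (forall m, derivable g x (delta_mx 0 m)) ->
  gradient (fun y => f y * g y) x = f x *: gradient g x + g x *: gradient f x.
Proof. by move=> df dg; apply/rowP => m; rewrite !mxE deriveM. Qed.

End Gradient.

Section Derivability.
Variable R : realType.
Notation V := 'rV[R]_20.
Implicit Types (x v : V).

Lemma derivable_Yc (k : nat) x v : derivable (fun y : V => Yc y k) x v.
Proof. exact/diff_derivable/differentiable_coord. Qed.

Ltac derivable_rational := repeat (lazymatch goal with
  | |- derivable (fun y => @?f y + @?g y) _ _ => apply: (derivableD (f := f) (g := g))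
  | |- derivable (fun y => @?f y - @?g y) _ _ => apply: (derivableB (f := f) (g := g))
  | |- derivable (fun y => @?f y * @?g y) _ _ => apply: (derivableM (f := f) (g := g))
  | |- derivable (fun y => - @?f y) _ _ => apply: (derivableN (f := f))
  | |- derivable (fun y => (@?f y)^-1) _ _ => apply: (derivableV (f := f))
  | |- derivable (fun y => Yc y _) _ _ => apply: derivable_Yc
  | |- derivable (fun _ => ?c) _ _ => apply: (derivable_cst c)
  end; try done).

Lemma derivable_alpha (j k : nat) x v : derivable (fun y => alpha y j k) x v.
Proof.
rewrite /alpha; case: j => [|[|[|[|[|j]]]]]; case: (k == 0)%N;
  rewrite /z1 /y2 /z3 /z4 /y5; derivable_rational.
Qed.

Lemma derivable_pvec (j k : nat) x v :
  1 - y2 x * z1 x != 0 -> derivable (fun y => pvec y j k) x v.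
Proof.
move=> h1; case: j => [|[|[|[|[|j]]]]];
  rewrite /pvec /p3 /p4 /p5 /z1 /y2 /z3 /z4 /y5 /=; derivable_rational.
Qed.

Lemma derivable_qvec (j k : nat) x v :
  in_domain x -> derivable (fun y => qvec y j k) x v.
Proof.
case=> h1 [h2 h3].
(* the denominators of qvec, in the shape derivableV asks for *)
have h1' : y2 x * z1 x - 1 != 0 by rewrite -opprB oppr_eq0.
have h12 : (z1 x + z3 x) * (y2 x * z1 x - 1) != 0 by rewrite mulf_neq0.
have h13 : (y2 x * z1 x - 1) * (y2 x * z3 x + 1) != 0 by rewrite mulf_neq0.
have h23 : (z1 x + z3 x) * (y2 x * z3 x + 1) != 0 by rewrite mulf_neq0.
case: j => [|[|[|[|[|j]]]]];
  rewrite /qvec /q4 /q5 /z1 /y2 /z3 /z4 /y5 /=; derivable_rational.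
Qed.

Lemma derivable_Cvec (j i : nat) x v :
  in_domain x -> derivable (fun y => Cvec y j i) x v.
Proof.
move=> dom; rewrite /Cvec; case: (i < 2)%N.
- by apply: derivable_pvec; case: dom.
- apply: (derivableM (f := fun y => alpha_dot_delta0 y j)); last exact: derivable_qvec.
  by rewrite /alpha_dot_delta0; derivable_rational; apply: derivable_alpha.
Qed.

End Derivability.

Section Jacobian.
Variable R : realType.
Notation V := 'rV[R]_20.
Implicit Types (x v y : V).

Lemma row_jacobianZ (f : V -> 'rV[R]_8) x (l : 'I_8) :
  (forall m, derivable f x (delta_mx 0 m)) ->
  row l (jacobianZ f x) = gradient (fun y => f y 0 l) x.
Proof. by move=> df; apply/rowP => m; rewrite !mxE (derive_mx (df m)) mxE. Qed.

Definition kappaC (nu i : nat) y : R := kappa y nu * Cvec y nu i.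

Lemma derivable_kappaC nu i x v : in_domain x -> derivable (kappaC nu i) x v.
Proof.
move=> dom; apply: (derivableM (f := fun y => kappa y nu)).
- exact: derivable_Yc.
- exact: derivable_Cvec.
Qed.

Lemma Z1E nu y (l : 'I_8) : Z1 nu y 0 l = kappaC nu (l %% 4) y * alpha y nu (l %/ 4).
Proof. by rewrite mxE /Cmat /kappaC mulrA. Qed.

Definition alpha_var (nu : nat) : nat := match nu with 1 | 3 | 4 => 1 | _ => 0 end.

Lemma gradient_alpha nu (k : nat) x : (k < 2)%N ->
  gradient (fun y => alpha y nu k) x =
  if k == alpha_var nu then gradient (fun y => alpha y nu (alpha_var nu)) x else 0.
Proof.
move=> k_lt2; case: eqP => [-> //|k_ne].
have -> : (fun y => alpha y nu k) = cst (alpha x nu k).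
  apply/funext => y /=.
  by case: nu k_ne => [|[|[|[|[|nu]]]]]; case: k k_lt2 => [|[|]].
by apply/rowP => m; rewrite !mxE derive_cst.
Qed.

Lemma derivable_Z1 nu x v : in_domain x -> derivable (Z1 nu) x v.
Proof.
move=> dom; apply/derivable_mxP => i l; rewrite [i]ord1.
under eq_fun do rewrite Z1E.
apply: (derivableM (f := kappaC nu (l %% 4))).
- exact: derivable_kappaC.
- exact: derivable_alpha.
Qed.

Lemma row_jacobianZ1 nu Y (l : 'I_8) : in_domain Y ->
  row l (jacobianZ (Z1 nu) Y) =
  alpha Y nu (l %/ 4) *: row (inord (l %% 4)) (\matrix_(i < 4) gradient (kappaC nu i) Y)
  + (if (l %/ 4 == alpha_var nu)%N then kappaC nu (l %% 4) Y else 0)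
    *: gradient (fun y => alpha y nu (alpha_var nu)) Y.
Proof.
move=> dom; rewrite row_jacobianZ; last by move=> m; apply: derivable_Z1.
under eq_fun do rewrite Z1E.
rewrite gradientM; last 2 first.
- by move=> m; apply: derivable_kappaC.
- by move=> m; apply: derivable_alpha.
rewrite rowK inordK ?ltn_pmod // gradient_alpha; last by rewrite ltn_divLR.
by rewrite addrC; case: eqP; rewrite ?scaler0 ?scale0r.
Qed.

End Jacobian.

Theorem lemma3p2 (R : realType) (nu : nat) (Y : 'rV[R]_20) :
  (1 <= nu <= 5)%N -> in_domain Y ->
  (\rank (jacobianZ (Z1 nu) Y) <= 5)%N.
Proof.
(* out of range, nu is treated as 5 by the definitions: the bound holds for every nu *)
move=> _ dom; apply: mxrank_rows_combination => l.
exact: row_jacobianZ1.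
Qed.
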